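(* Let $R$ be an exchange ring in which $2$ is invertible, and let $a\in R$ be such that $a-a^3$ is regular. Then there is an isomorphism of right $R$-modules $(a-a^3)R\oplus r(a)\cong (a-a^3)R\oplus R/aR$.
   Context: All rings are associative with identity; modules are right modules. An element $x\in R$ is regular if $x=xyx$ for some $y\in R$. $R$ is an exchange ring if for every $x\in R$ there is an idempotent $e\in xR$ with $1-e\in(1-x)R$. $r(a)=\{x\in R: ax=0\}$. *)

From HB Require Import structures.
From mathcomp Require Import all_boot all_algebra.
Set Implicit Arguments. Unset Strict Implicit. Unset Printing Implicit Defensive.
Import GRing.Theory.
Local Open Scope ring_scope.

Definition regular (R : pzRingType) (x : R) : Prop := exists y : R, x = x * y * x.

Definition rideal (R : pzRingType) (x : R) (z : R) : Prop := exists y : R, z = x * y.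

Definition exchange_ring (R : pzRingType) : Prop :=
  forall x : R, exists e : R, e * e = e /\ rideal x e /\ rideal (1 - x) (1 - e).

Definition rann (R : pzRingType) (a : R) (x : R) : Prop := a * x = 0.

(* Right R-module isomorphism  bR (+) r(a)  ~=  bR (+) R/aR.
   Elements of bR (+) R/aR are represented by pairs (w1,w2) with w1 in bR and
   w2 in R, two representatives being identified iff they agree in the first
   component and differ by an element of aR in the second.  A module map into
   the quotient is thus given by a function f into representatives whose
   induced map on classes is additive and right R-linear; it is an isomorphism
   iff the induced map on classes is bijective. *)
Definition iso_sum_rann_quot (R : pzRingType) (b a : R) : Prop :=
  let dom (u : R * R) := rideal b u.1 /\ rann a u.2 in
  let cod (w : R * R) := rideal b w.1 in
  let eqv (w w' : R * R) := w.1 = w'.1 /\ rideal a (w.2 - w'.2) in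
  exists f : R * R -> R * R,
    (forall u, dom u -> cod (f u)) /\
    (forall u v, dom u -> dom v ->
       eqv (f (u.1 + v.1, u.2 + v.2)) ((f u).1 + (f v).1, (f u).2 + (f v).2)) /\
    (forall u (r : R), dom u ->
       eqv (f (u.1 * r, u.2 * r)) ((f u).1 * r, (f u).2 * r)) /\
    (forall u v, dom u -> dom v -> eqv (f u) (f v) -> u = v) /\
    (forall w, cod w -> exists u, dom u /\ eqv (f u) w).

From HB Require Import structures.
From mathcomp Require Import all_boot all_algebra.
Import GRing.Theory.
Local Open Scope ring_scope.

(* With q := 1 - a^2 we have a - a^3 = aq = qa and 1 = a^2 + q.  If c is an
   inner inverse of b := a - a^3, then e := bc is an idempotent generating bR,
   and (u1, u2) |-> (e w, [w]) with w := q c u1 + u2 is the isomorphism: the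
   key point is that qR and aR meet inside bR, because
   qz = a^2 qz + q qz = b(a z) + q a y when qz = a y. *)

Section SplitByCube.

Set Implicit Arguments.
Unset Strict Implicit.

Variables (R : pzRingType) (a q b c : R).
Hypotheses (aq_b : a * q = b) (qa_b : q * a = b) (sqa_q : a * a + q = 1).
Hypothesis bcb : b * c * b = b.

Local Notation e := (b * c).

Lemma comm_ab : a * b = b * a.
Proof. by rewrite -{1}qa_b -{1}aq_b !mulrA. Qed.

Lemma split_sq (x : R) : x = a * (a * x) + q * x.
Proof. by rewrite mulrA -mulrDl sqa_q mul1r. Qed.

Lemma mulq_rann (x : R) : a * x = 0 -> q * x = x.
Proof. by move=> ax0; rewrite {2}(split_sq x) ax0 mulr0 add0r. Qed.

Lemma mule_ideal (z : R) : e * (b * z) = b * z.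
Proof. by rewrite mulrA bcb. Qed.

Lemma mule_idem (z : R) : e * (e * z) = e * z.
Proof. by rewrite -(mulrA b c z) mule_ideal mulrA. Qed.

Lemma rideal_q_cap_a (z y : R) : q * z = a * y -> rideal b (q * z).
Proof.
move=> qz_ay; exists (a * z + y).
rewrite {1}(split_sq (q * z)) [in q * (q * z)]qz_ay.
by rewrite (mulrA a q) aq_b mulrA comm_ab -mulrA (mulrA q a) qa_b -mulrDr.
Qed.

Definition iso_lift (u : R * R) : R := q * (c * u.1) + u.2.

Definition iso_fun (u : R * R) : R * R := (e * iso_lift u, iso_lift u).

Lemma iso_liftD (u v : R * R) :
  iso_lift (u.1 + v.1, u.2 + v.2) = iso_lift u + iso_lift v.
Proof. by rewrite /iso_lift /= !mulrDr addrACA. Qed.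

Lemma iso_liftB (u v : R * R) :
  iso_lift (u.1 - v.1, u.2 - v.2) = iso_lift u - iso_lift v.
Proof. by rewrite /iso_lift /= !mulrBr opprD addrACA. Qed.

Lemma iso_liftMr (u : R * R) (r : R) :
  iso_lift (u.1 * r, u.2 * r) = iso_lift u * r.
Proof. by rewrite /iso_lift /= mulrDl -!mulrA. Qed.

Lemma iso_fun_ker (x1 x2 y : R) :
  rideal b x1 -> a * x2 = 0 ->
  e * iso_lift (x1, x2) = 0 -> iso_lift (x1, x2) = a * y ->
  x1 = 0 /\ x2 = 0.
Proof.
move=> [r ->] ax2 ed0 d_ay.
have d_q : iso_lift (b * r, x2) = q * (c * (b * r) + x2).
  by rewrite /iso_lift mulrDr (mulq_rann ax2).
have d0 : iso_lift (b * r, x2) = 0.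
  have [z d_bz] := rideal_q_cap_a (etrans (esym d_q) d_ay).
  by rewrite -ed0 d_q d_bz mule_ideal.
have br0 : b * r = 0.
  have <- : a * iso_lift (b * r, x2) = b * r.
    by rewrite /iso_lift mulrDr ax2 addr0 mulrA aq_b mulrA mule_ideal.
  by rewrite d0 mulr0.
by move: d0; rewrite /iso_lift br0 !mulr0 add0r.
Qed.

Lemma iso_fun_inj (u v : R * R) :
  rideal b u.1 -> a * u.2 = 0 -> rideal b v.1 -> a * v.2 = 0 ->
  e * iso_lift u = e * iso_lift v -> rideal a (iso_lift u - iso_lift v) ->
  u = v.
Proof.
case: u v => [u1 u2] [v1 v2] [r1 /= ->] au2 [r2 /= ->] av2 ef [y fy].
have [||||] := @iso_fun_ker (b * r1 - b * r2) (u2 - v2) y.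
- by exists (r1 - r2); rewrite mulrBr.
- by rewrite mulrBr au2 av2 subrr.
- by rewrite (iso_liftB (_, u2) (_, v2)) mulrBr ef subrr.
- by rewrite (iso_liftB (_, u2) (_, v2)).
by move=> /eqP; rewrite subr_eq0 => /eqP -> /eqP; rewrite subr_eq0 => /eqP ->.
Qed.

Lemma iso_fun_surj (w1 w2 : R) :
  rideal b w1 ->
  exists u, (rideal b u.1 /\ a * u.2 = 0) /\
            (iso_fun u).1 = w1 /\ rideal a ((iso_fun u).2 - w2).
Proof.
move=> [r w1_br].
set V := w1 + (1 - e) * (q * w2).
have aV_b : a * V = b * (a * r + w2 - a * (c * (q * w2))).
  rewrite /V w1_br mulrDr mulrBl mul1r mulrBr (mulrA a q) aq_b.
  rewrite -(mulrA b c) !(mulrA a b) comm_ab -!mulrA.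
  by rewrite [RHS]mulrBr mulrDr addrA.
have lift_V : iso_lift (a * V, V - q * (c * (a * V))) = V.
  by rewrite /iso_lift /= addrC subrK.
exists (a * V, V - q * (c * (a * V))); rewrite /iso_fun lift_V /=.
split; [split|split].
- by rewrite aV_b; eexists.
- by rewrite mulrBr (mulrA a q) aq_b aV_b (mulrA b c) mule_ideal subrr.
- by rewrite /V mulrDr w1_br mule_ideal mulrBl mul1r mulrBr mule_idem
    subrr addr0.
exists (q * r - a * w2 - q * (c * (q * w2))).
rewrite !mulrBr !(mulrA a q) aq_b (mulrA b c) -w1_br.
rewrite /V mulrBl mul1r [X in _ - X = _](split_sq w2) opprD !addrA.
by rewrite addrAC (addrAC (w1 + _)) addrK addrAC.
Qed.

End SplitByCube.

Theorem lemma2p2 (R : pzRingType) (a : R) :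
  exchange_ring R ->
  (exists t : R, 2%:R * t = 1 /\ t * 2%:R = 1) ->
  regular (a - a ^+ 3) ->
  iso_sum_rann_quot (a - a ^+ 3) a.
Proof.
move=> _ _ [c b_bcb].
set q : R := 1 - a ^+ 2.
have aq_b : a * q = a - a ^+ 3 by rewrite mulrBr mulr1 -exprS.
have qa_b : q * a = a - a ^+ 3 by rewrite mulrBl mul1r -exprSr.
have sqa_q : a * a + q = 1 by rewrite -expr2 addrC subrK.
have bcb : (a - a ^+ 3) * c * (a - a ^+ 3) = a - a ^+ 3 by rewrite -b_bcb.
exists (iso_fun q (a - a ^+ 3) c); split; [|split; [|split; [|split]]].
- by move=> u _; exists (c * iso_lift q c u); rewrite mulrA.
- move=> u v _ _; rewrite /iso_fun /= iso_liftD mulrDr.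
  by split; last by exists 0; rewrite subrr mulr0.
- move=> u r _; rewrite /iso_fun /= iso_liftMr mulrA.
  by split; last by exists 0; rewrite subrr mulr0.
- move=> u v [bu au] [bv av] [ef fa].
  exact: iso_fun_inj bu au bv av ef fa.
- move=> [w1 w2] /= w1_b.
  have [u [dom_u fu]] := iso_fun_surj aq_b qa_b sqa_q bcb w2 w1_b.
  by exists u.
Qed.
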